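(* Let $t$ be an integer with $m=2t+1\geq 11$ and $n=2^m+1$. Put $\delta_1=\frac{n}{3}$, $\delta_2=\frac{n-3}{6}$, $\delta_3=\delta_2-2$, $\delta_4=\delta_2-8$, $\delta_5=\delta_2-10$. Then $\delta_1>\delta_2>\delta_3>\delta_4>\delta_5$ are respectively the first, second, third, fourth and fifth largest coset leaders modulo $n$ (i.e. they are coset leaders, and every integer $x$ with $\delta_5<x\leq n-1$ that is a coset leader belongs to $\{\delta_1,\delta_2,\delta_3,\delta_4\}$).
   Context: For $n=2^m+1$ and an integer $x$, the 2-cyclotomic coset of $x$ modulo $n$ is $C_x=\{x\cdot 2^{j} \bmod n : j\geq 0\}\subseteq\{0,1,\dots,n-1\}$. For $0\leq x\leq n-1$, ''$x$ is a coset leader'' means that $x$ is the smallest element of $C_x$. *)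

From mathcomp Require Import all_boot.
Set Implicit Arguments. Unset Strict Implicit. Unset Printing Implicit Defensive.

Definition in_coset (n x y : nat) : Prop := exists j : nat, y = (x * 2 ^ j) %% n.

Definition coset_leader (n x : nat) : Prop :=
  x < n /\ forall y, in_coset n x y -> x <= y.

From mathcomp Require Import all_boot zify.

Set Implicit Arguments.
Unset Strict Implicit.
Unset Printing Implicit Defensive.

(* Since 2^m = -1 modulo n = 2^m + 1, the coset of x is {±x 2^k mod n : k < m}, so
   x is a coset leader iff every residue x 2^k mod n with k < m lies in [x, n - x].
   For x = n/3 these residues are n/3 and 2n/3.  Writing 2^m = 96h + 32, the residues
   of the four candidates x = 16h + 5 - g are explicit: for small k they are
   q - s 4^i or 2q - 2s 4^i (q = n/3, s = 2g + 1), for k = m - j with j <= 4 they are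
   (c n - x)/2^j with c = x mod 2^j.  Conversely a leader satisfies 3x <= n; if
   n/6 < x < n/3 the odd-index residues are trapped in [n/3, 2n/3), which contradicts
   x 2^m = n - x; and in the remaining range only odd x can be leaders, while 16h + 1
   and 16h - 1 have the smaller elements 10h + 4 and 14h + 4 in their cosets. *)

Definition leader_window (n x r : nat) : Prop := x <= r /\ r + x <= n.

Lemma modn_eq_rem d q r a : a = q * d + r -> r < d -> a %% d = r.
Proof. by move=> -> ltrd; rewrite modnMDl modn_small. Qed.

Lemma expn2_mod3 k : 2 ^ k %% 3 = 1 \/ 2 ^ k %% 3 = 2.
Proof. by elim: k => [|k IHk]; [left | rewrite expnS; lia]. Qed.

Lemma expn4_mod3 i : 4 ^ i %% 3 = 1.
Proof. by rewrite -modnXm exp1n. Qed.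

Lemma expn2_odd_mod96 m : odd m -> 5 <= m -> exists h, 2 ^ m = 96 * h + 32.
Proof.
move=> m_odd m_ge5; set k := m./2 - 2; exists (4 ^ k %/ 3).
have -> : m = 5 + 2 * k by move: m_ge5; rewrite /k -{1 3}(odd_double_half m) m_odd; lia.
rewrite expnD expnM {1}(divn_eq (4 ^ k) 3) expn4_mod3; lia.
Qed.

Lemma rem_double n x k : (x * 2 ^ k.+1) %% n = (2 * ((x * 2 ^ k) %% n)) %% n.
Proof. by rewrite modnMmr expnS mulnCA. Qed.

(* Since q 4^i = q modulo 3q, the residues are q - s 4^i and 2q - 2s 4^i. *)
Lemma window_forward n q x s i :
  n = 3 * q -> 2 * x + s = q -> 0 < s -> s * 4 ^ i <= x + s ->
  leader_window n x ((x * 2 ^ (2 * i + 1)) %% n) /\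
  leader_window n x ((x * 2 ^ (2 * i + 2)) %% n).
Proof.
move=> En Eq s_gt0 le_s.
have E4 : 4 ^ i = 3 * (4 ^ i %/ 3) + 1 by rewrite {1}(divn_eq (4 ^ i) 3) expn4_mod3; lia.
have E2 e : 2 ^ (2 * i + e) = 4 ^ i * 2 ^ e by rewrite expnD expnM.
move: le_s; rewrite /leader_window !E2 E4; set u := 4 ^ i %/ 3 => le_s.
rewrite (@modn_eq_rem _ u (q - s * (3 * u + 1))).
  by rewrite (@modn_eq_rem _ (2 * u) (2 * q - 2 * s * (3 * u + 1))); nia.
all: nia.
Qed.

Section FermatModulus.

Variable m : nat.
Local Notation n := (2 ^ m + 1).

Lemma fermat_gt1 : 1 < n.
Proof. by rewrite addn1 ltnS expn_gt0. Qed.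

Lemma expn2m_modn : 2 ^ (2 * m) %% n = 1.
Proof.
rewrite mulnC expnM.
have -> : (2 ^ m) ^ 2 = (2 ^ m - 1) * n + 1 by have := expn_gt0 2 m; nia.
by rewrite modnMDl modn_small // fermat_gt1.
Qed.

Lemma rem_mod_period x j : (x * 2 ^ j) %% n = (x * 2 ^ (j %% (2 * m))) %% n.
Proof.
rewrite {1}(divn_eq j (2 * m)) expnD [_ * (2 * m)]mulnC expnM.
rewrite mulnCA -modnMml -modnXm expn2m_modn exp1n.
by rewrite (modn_small fermat_gt1) mul1n.
Qed.

Lemma rem_addm x k : 0 < (x * 2 ^ k) %% n ->
  (x * 2 ^ (k + m)) %% n = n - (x * 2 ^ k) %% n.
Proof.
move=> r_gt0.
have -> : x * 2 ^ (k + m) = (x * 2 ^ k) * (n - 1) by rewrite expnD mulnA addnK.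
rewrite -modnMml.
have : (x * 2 ^ k) %% n < n by rewrite ltn_mod addn1.
move: r_gt0; set r := (x * 2 ^ k) %% n => r_gt0 ltrn.
by apply: (@modn_eq_rem _ (r - 1)); nia.
Qed.

Lemma rem_expm x : 0 < x < n -> (x * 2 ^ m) %% n = n - x.
Proof.
move=> /andP[x_gt0 ltxn].
have rem0 : (x * 2 ^ 0) %% n = x by rewrite muln1 modn_small.
by move: (@rem_addm x 0); rewrite rem0 add0n; apply.
Qed.

Lemma coset_leader_window x k :
  coset_leader n x -> leader_window n x ((x * 2 ^ k) %% n).
Proof.
move=> [ltxn min_x]; split; first by apply: min_x; exists k.
have [r0|r_gt0] := posnP ((x * 2 ^ k) %% n); first by rewrite r0; lia.
have := min_x _ (ex_intro _ (k + m) erefl).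
have : (x * 2 ^ k) %% n < n by rewrite ltn_mod addn1.
by rewrite rem_addm //; lia.
Qed.

Lemma coset_leader_of_window x : 0 < m -> 0 < x < n ->
  (forall k, k < m -> leader_window n x ((x * 2 ^ k) %% n)) ->
  coset_leader n x.
Proof.
move=> m_gt0 /andP[x_gt0 ltxn] win; split=> // _ [j ->].
rewrite rem_mod_period.
have : j %% (2 * m) < 2 * m by rewrite ltn_mod; lia.
set b := j %% (2 * m) => ltb.
have [ltbm|lemb] := ltnP b m; first by case: (win b ltbm).
rewrite -(subnK lemb).
have [lo hi] := win (b - m) ltac:(lia).
by rewrite rem_addm; lia.
Qed.

Lemma in_coset_of_rem x y a c : y < n -> c <= 2 * m ->
  (y * 2 ^ c) %% n = (x * 2 ^ a) %% n -> in_coset n x y.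
Proof.
move=> ltyn lec eq_rem; exists (a + (2 * m - c)).
rewrite expnD mulnA -modnMml -eq_rem modnMml -mulnA -expnD subnKC //.
by rewrite -modnMmr expn2m_modn muln1 modn_small.
Qed.

Lemma coset_leader_odd x : 0 < m -> 0 < x -> coset_leader n x -> odd x.
Proof.
move=> m_gt0 x_gt0 [ltxn min_x]; case odd_x: (odd x) => //.
have x2 : x = x./2 * 2 by rewrite -[LHS]odd_double_half odd_x muln2.
have := min_x x./2 (@in_coset_of_rem x x./2 0 1 ltac:(lia) ltac:(lia) _).
by rewrite expn0 expn1 muln1 -x2; lia.
Qed.

Lemma coset_leader_le_third x : coset_leader n x -> 3 * x <= n.
Proof.
move=> leader_x; have [ltxn _] := leader_x.
have := coset_leader_window 0 leader_x; have := coset_leader_window 1 leader_x.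
rewrite expn0 expn1 muln1 (modn_small ltxn) /leader_window.
have [lt2n|gt2n|->] := ltngtP (x * 2) n; last by rewrite modnn; lia.
- by rewrite modn_small //; lia.
- by lia.
Qed.

(* With x = Q 2^j + c the residue is y = c 2^(m-j) - Q, and 2^j y = c n - x; since
   6x <= n, it lies in [x, n - x] as soon as c/2^j lies in [1/6, 5/6]. *)
Lemma window_backward x j : j <= m -> 6 * x <= n ->
  2 ^ j < 6 * (x %% 2 ^ j) <= 5 * 2 ^ j + 1 ->
  leader_window n x ((x * 2 ^ (m - j)) %% n).
Proof.
move=> lejm le6x; set D := 2 ^ j; set c := x %% D => /andP[lo hi].
have D_gt0 : 0 < D by rewrite expn_gt0.
have Ex : x = x %/ D * D + c := divn_eq x D.
have Em : 2 ^ m = 2 ^ (m - j) * D by rewrite -expnD subnK.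
have ltcD : c < D by rewrite ltn_mod.
move: Ex Em lo hi ltcD; set Q := x %/ D; set P := 2 ^ (m - j) => Ex Em lo hi ltcD.
have Dy : D * (c * P - Q) + x = c * n by nia.
have window_y : leader_window n x (c * P - Q).
  by split; rewrite -(leq_pmul2l D_gt0); nia.
rewrite (@modn_eq_rem _ Q (c * P - Q)) //; first by nia.
by case: window_y; nia.
Qed.

Hypothesis m_odd : odd m.

Lemma dvd3_fermat : 3 %| n.
Proof.
have -> : m = 1 + 2 * m./2 by rewrite -{1}(odd_double_half m) m_odd -mul2n.
by rewrite expnD expnM /dvdn -modnDml -modnMmr expn4_mod3.
Qed.

Lemma coset_leader_third : coset_leader n (n %/ 3).
Proof.
have m_gt0 : 0 < m by case: m m_odd.
have En : n = n %/ 3 * 3 by rewrite divnK ?dvd3_fermat.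
have n_ge3 : 3 <= n by rewrite -[3]/(2 ^ 1 + 1) leq_add2r leq_exp2l.
apply: coset_leader_of_window => // [|k _]; first by lia.
move: En; set q := n %/ 3 => En.
rewrite /leader_window [in X in _ %% X]En -muln_modr.
by case: (expn2_mod3 k) => ->; lia.
Qed.

Lemma no_coset_leader_between x :
  n %/ 3 < 2 * x -> x < n %/ 3 -> ~ coset_leader n x.
Proof.
move=> lo hi leader_x; set q := n %/ 3 in lo hi.
have En : n = 3 * q by rewrite mulnC divnK ?dvd3_fermat.
have win k := coset_leader_window k leader_x.
have trapped i : q <= (x * 2 ^ (2 * i + 1)) %% n < 2 * q.
  elim: i => [|i IHi]; first by rewrite expn1 modn_small; lia.
  have [lo2 hi2] := win (2 * i + 1).+1.
  have -> : 2 * i.+1 + 1 = (2 * i + 1).+2 by lia.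
  move: IHi lo2 hi2; rewrite !rem_double; set y := _ %% n => /andP[loy hiy].
  have [lt2y|le2y] := ltnP (2 * y) n.
  - by rewrite (modn_small lt2y) (@modn_eq_rem _ 1 (4 * y - n)); lia.
  - by rewrite (@modn_eq_rem _ 1 (2 * y - n)) ?modn_small; lia.
have Em : 2 * m./2 + 1 = m by rewrite -[RHS]odd_double_half m_odd addnC mul2n.
by have := trapped m./2; rewrite Em rem_expm; lia.
Qed.

End FermatModulus.

(* Here n = 96h + 33, n/3 = 32h + 11 and (n - 3)/6 = 16h + 5. *)
Section NearSixth.

Variables m h : nat.
Hypothesis expm : 2 ^ m = 96 * h + 32.
Local Notation n := (2 ^ m + 1).

Lemma exponent_ge5 : 5 <= m.
Proof. by rewrite -(@leq_exp2l 2) // expm; lia. Qed.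

Lemma exponent_odd : odd m.
Proof.
case m_odd: (odd m) => //; move: expm.
rewrite -[m]odd_double_half m_odd -mul2n expnM {1}(divn_eq (4 ^ _) 3) expn4_mod3.
lia.
Qed.

Lemma coset_leader_near_sixth x : 0 < h ->
  x \in [:: 16 * h + 5; 16 * h + 3; 16 * h - 3; 16 * h - 5] -> coset_leader n x.
Proof.
move=> h_gt0; rewrite !inE => x_cases.
have m_ge5 := exponent_ge5.
have Em : m = 2 * m./2 + 1 by rewrite -{1}(odd_double_half m) exponent_odd addnC mul2n.
apply: coset_leader_of_window; [lia | rewrite expm; lia | move=> k ltkm].
have [->|k_gt0] := posnP k.
  by rewrite expn0 muln1 modn_small /leader_window expm; lia.
have [lekm|gtkm] := leqP k (m - 5).
- set i := k.-1./2.
  have pow_i : 128 * 4 ^ i <= 96 * h + 32.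
    have : 2 ^ (2 * i + 7) <= 2 ^ m by rewrite leq_exp2l; lia.
    by rewrite expnD expnM expm mulnC.
  have [win1 win2] := @window_forward n (32 * h + 11) x (2 * (16 * h + 5 - x) + 1) i
    ltac:(rewrite expm; lia) ltac:(lia) ltac:(lia) ltac:(nia).
  by have [->|->] : k = 2 * i + 1 \/ k = 2 * i + 2 by lia.
- rewrite -(subKn (ltnW ltkm)); apply: window_backward; [lia | rewrite expm; lia |].
  have j_cases : m - k = 1 \/ m - k = 2 \/ m - k = 3 \/ m - k = 4 by lia.
  by case: j_cases => [->|[->|[->|->]]]; lia.
Qed.

Lemma near_sixth_coset_leader_cases x : 2 < h -> 16 * h - 5 < x <= 16 * h + 5 ->
  coset_leader n x -> x \in [:: 16 * h + 5; 16 * h + 3; 16 * h - 3].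
Proof.
move=> h_gt2 x_range leader_x; have [ltxn min_x] := leader_x.
have m_ge5 := exponent_ge5.
have odd_x := @coset_leader_odd m x ltac:(lia) ltac:(lia) leader_x.
have : x = 16 * h + 1 \/ x = 16 * h - 1 \/ x \in [:: 16 * h + 5; 16 * h + 3; 16 * h - 3].
  by rewrite !inE; lia.
case=> [x_def|[x_def|//]]; exfalso.
- have y_coset : in_coset n x (10 * h + 4).
    apply: (@in_coset_of_rem m x _ m 3); [rewrite expm; lia | lia |].
    by rewrite rem_expm ?modn_small expm; lia.
  by have := min_x _ y_coset; lia.
- have y_coset : in_coset n x (14 * h + 4).
    apply: (@in_coset_of_rem m x _ 0 3); [rewrite expm; lia | lia |].
    by rewrite muln1 (modn_small ltxn) (@modn_eq_rem _ 1 x) // expm; lia.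
  by have := min_x _ y_coset; lia.
Qed.

End NearSixth.

Theorem theorem3p5 (t : nat) :
  let m := 2 * t + 1 in
  let n := 2 ^ m + 1 in
  let d1 := n %/ 3 in
  let d2 := (n - 3) %/ 6 in
  let d3 := d2 - 2 in
  let d4 := d2 - 8 in
  let d5 := d2 - 10 in
  11 <= m ->
  [/\ d1 > d2, d2 > d3, d3 > d4 & d4 > d5] /\
  [/\ coset_leader n d1, coset_leader n d2, coset_leader n d3,
      coset_leader n d4 & coset_leader n d5] /\
  (forall x, d5 < x <= n - 1 -> coset_leader n x ->
     x = d1 \/ x = d2 \/ x = d3 \/ x = d4).
Proof.
move=> m n d1 d2 d3 d4 d5 m_ge11.
have m_odd : odd m by rewrite /m oddD oddM.
have [h expm] := expn2_odd_mod96 m_odd ltac:(lia).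
have h_ge21 : 21 <= h by move: (@leq_pexp2l 2 _ _ isT m_ge11); rewrite expm; lia.
have En : n = 96 * h + 33 by rewrite /n expm; lia.
have Ed1 : d1 = 32 * h + 11 by rewrite /d1 En; lia.
have Ed2 : d2 = 16 * h + 5 by rewrite /d2 En; lia.
have [Ed3 Ed4 Ed5] : [/\ d3 = 16 * h + 3, d4 = 16 * h - 3 & d5 = 16 * h - 5].
  by rewrite /d3 /d4 /d5 Ed2; split; lia.
have leader_sixth x : x \in [:: 16 * h + 5; 16 * h + 3; 16 * h - 3; 16 * h - 5] ->
    coset_leader n x by apply: (coset_leader_near_sixth expm); lia.
split; first by split; lia.
split.
  split; [exact: coset_leader_third | ..]; apply: leader_sixth;
    by rewrite !inE ?Ed2 ?Ed3 ?Ed4 ?Ed5 eqxx ?orbT.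
move=> x /andP[lt_d5x le_xn] leader_x.
have le3x := coset_leader_le_third leader_x.
have [mid|low] := ltnP d1 (2 * x).
  have [ltxd1|] := ltnP x d1; last by left; lia.
  by case: (no_coset_leader_between m_odd mid ltxd1 leader_x).
have := near_sixth_coset_leader_cases (x := x) expm ltac:(lia) ltac:(lia) leader_x.
by rewrite !inE; lia.
Qed.
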